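(* Let $A, C, D$ be binary random variables, with $A$ taking values $a,\overline{a}$, $C$ taking values $c,\overline{c}$, $D$ taking values $d,\overline{d}$, and let $Y$ be a (discrete or continuous) real random variable with finite expectation. Suppose the joint distribution factorizes as \[ p(A,C,D,Y)=p(C)\,p(D\mid C)\,p(A\mid C)\,p(Y\mid A,C) \] (i.e. $C$ is a common cause of $A$ and $Y$, $A$ causes $Y$, and $D$ is a proxy of $C$, so that $D$ is conditionally independent of $(A,Y)$ given $C$). Assume that $C$ and $D$ are dependent, and that every event $\{A=x, C=y, D=z\}$ has positive probability. If $E[Y\mid A,D]$ is monotone in $D$, then $E[Y\mid A,C]$ is monotone in $C$.
   Context: $E[Y\mid A,D]$ is called nondecreasing in $D$ if $E[Y\mid a,d]\ge E[Y\mid a,\overline{d}]$ and $E[Y\mid \overline{a},d]\ge E[Y\mid \overline{a},\overline{d}]$; nonincreasing in $D$ if both inequalities are reversed ($\le$); and monotone in $D$ if it is nondecreasing or nonincreasing in $D$. The same definitions apply with $C$ (values $c,\overline{c}$) in place of $D$. *)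

From HB Require Import structures.
From mathcomp Require Import all_boot all_order all_algebra.
From mathcomp Require Import all_classical all_reals all_analysis.
Set Implicit Arguments. Unset Strict Implicit. Unset Printing Implicit Defensive.
Import Order.TTheory GRing.Theory Num.Theory.
Local Open Scope classical_set_scope.
Local Open Scope ring_scope.

Section Defs.
Context {d : measure_display} {T : measurableType d} {R : realType}.

Definition ev {V : Type} (X : T -> V) (x : V) : set T := [set t | X t = x].

Definition pr (P : probability T R) (B : set T) : R := fine (P B).

Definition cpr (P : probability T R) (B G : set T) : R := pr P (B `&` G) / pr P G.

Definition cexp (P : probability T R) (Y : T -> R) (G : set T) : R :=
  fine (\int[P]_(t in G) (Y t)%:E) / pr P G.

(* Binary variables take values in bool: true encodes a (resp. c, d),
   false encodes \overline{a} (resp. \overline{c}, \overline{d}). *)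
Definition nondecr_in (f : bool -> bool -> R) : Prop :=
  f false false <= f false true /\ f true false <= f true true.
Definition nonincr_in (f : bool -> bool -> R) : Prop :=
  f false true <= f false false /\ f true true <= f true false.
Definition monotone_in (f : bool -> bool -> R) : Prop :=
  nondecr_in f \/ nonincr_in f.

End Defs.

(* Write q z y = P(D = z | C = y) and m x y = E[Y | A = x, C = y].  The
   factorization makes D independent of (A, Y) given C, so on {A = x, C = y}
   the events {D = z} rescale both the mass and the integral of Y by q z y.
   Hence E[Y | A = x, D = z] is the mixture of m x c and m x c' with weights
   q z y * P(A = x, C = y), and since q d' y = 1 - q d y,
     E[Y | x, d] - E[Y | x, d'] = (m x c - m x c') * gain x,
   where gain x has the sign of q d c - q d c' for both values of x.  That sign
   is nonzero because C and D are dependent, so each difference in D is the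
   corresponding difference in C times factors of one common strict sign, and
   monotonicity in D transfers to monotonicity in C. *)

From HB Require Import structures.
From mathcomp Require Import all_boot all_order all_algebra.
From mathcomp Require Import all_classical all_reals all_analysis.
From mathcomp Require Import measurable_realfun.
From mathcomp.algebra_tactics Require Import ring lra.
Import Order.TTheory GRing.Theory Num.Theory.
Local Open Scope classical_set_scope.
Local Open Scope ring_scope.

Section mixtures.
Context {R : realFieldType}.
Variables (a b p1 p0 : R).
Hypotheses (a_gt0 : 0 < a) (a_lt1 : a < 1) (b_gt0 : 0 < b) (b_lt1 : b < 1).
Hypotheses (p1_gt0 : 0 < p1) (p0_gt0 : 0 < p0).

Definition mixture_gain : R :=
  p1 * p0 * (a - b) / ((a * p1 + b * p0) * ((1 - a) * p1 + (1 - b) * p0)).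

Let mix_gt0 : 0 < a * p1 + b * p0. Proof. by rewrite addr_gt0 ?mulr_gt0. Qed.
Let comix_gt0 : 0 < (1 - a) * p1 + (1 - b) * p0.
Proof. by rewrite addr_gt0 ?mulr_gt0 ?subr_gt0. Qed.

Lemma mixture_gap (j1 j0 : R) :
  (a * j1 + b * j0) / (a * p1 + b * p0)
  - ((1 - a) * j1 + (1 - b) * j0) / ((1 - a) * p1 + (1 - b) * p0)
  = (j1 / p1 - j0 / p0) * mixture_gain.
Proof.
by rewrite /mixture_gain; field; rewrite ?lt0r_neq0 ?mix_gt0 ?comix_gt0.
Qed.

Lemma sgr_mixture_gain : Num.sg mixture_gain = Num.sg (a - b).
Proof.
rewrite /mixture_gain mulrC mulrA sgrM gtr0_sg ?mul1r //.
by rewrite mulrC divr_gt0 ?mulr_gt0.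
Qed.

End mixtures.

Lemma monotone_in_scaled {R : realType} {f g : bool -> bool -> R}
    {k : bool -> R} :
  0 < k true * k false ->
  (forall x, f x true - f x false = (g x true - g x false) * k x) ->
  monotone_in f -> monotone_in g.
Proof.
move=> k_same_sign fg; have f1 := fg true; have f0 := fg false.
case: (ltrgt0P (k true)) => [k1|k1|k0]; last by rewrite k0 mul0r ltxx in k_same_sign.
- have k0 : 0 < k false by rewrite -(pmulr_rgt0 _ k1).
  by case=> -[/= h0 h1]; [left|right]; split; nra.
- have k0 : k false < 0 by rewrite -(nmulr_rgt0 _ k1).
  by case=> -[/= h0 h1]; [right|left]; split; nra.
Qed.

Section integral_law.
Local Open Scope ereal_scope.
Context {d} {T : measurableType d} {R : realType} (mu : {measure set T -> \bar R}).

Lemma ge0_integral_mrestr {G : set T} (mG : measurable G) {f : T -> \bar R} :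
  measurable_fun setT f -> (forall x, 0 <= f x) ->
  \int[mrestr mu mG]_x f x = \int[mu]_(x in G) f x.
Proof.
move=> mf f0; have mCG : measurable (~` G) by exact: measurableC.
rewrite -(setUv G) ge0_integral_setU //; last first.
- by rewrite /disj_set setICr.
- by rewrite setUv.
rewrite [X in _ + X]null_set_integral ?adde0 //; last 2 first.
- exact: measurable_funTS.
- by rewrite /= /mrestr setICl measure0.
by apply: eq_measure_integral => A mA AG; rewrite /= /mrestr setIidl.
Qed.

Variables (Y : T -> R) (mY : measurable_fun setT Y).

Lemma ge0_integral_comp_scaled_law (G1 G2 : set T) (c : {nonneg R}) (g : R -> \bar R) :
  measurable G1 -> measurable G2 ->
  measurable_fun setT g -> (forall r, 0 <= g r) ->
  (forall B, measurable B ->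
     mu (G1 `&` Y @^-1` B) = c%:num%:E * mu (G2 `&` Y @^-1` B)) ->
  \int[mu]_(x in G1) g (Y x) = c%:num%:E * \int[mu]_(x in G2) g (Y x).
Proof.
move=> mG1 mG2 mg g0 lawE.
have mgY : measurable_fun setT (g \o Y) by exact: measurableT_comp.
have gY0 x : 0 <= (g \o Y) x by exact: g0.
rewrite -(ge0_integral_mrestr mG1 mgY gY0) -(ge0_integral_mrestr mG2 mgY gY0).
rewrite -[in LHS](preimage_setT Y) -[in RHS](preimage_setT Y).
rewrite -!ge0_integral_pushforward // -ge0_integral_mscale //.
apply: eq_measure_integral => B mB _ /=.
by rewrite /pushforward /mrestr setIC lawE // setIC.
Qed.

Lemma integral_scaled_law {G1 G2 : set T} {c : R} :
  measurable G1 -> measurable G2 -> (0 <= c)%R ->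
  mu.-integrable G2 (EFin \o Y) ->
  (forall B, measurable B ->
     mu (G1 `&` Y @^-1` B) = c%:E * mu (G2 `&` Y @^-1` B)) ->
  \int[mu]_(x in G1) (Y x)%:E = c%:E * \int[mu]_(x in G2) (Y x)%:E.
Proof.
move=> mG1 mG2 c0 iY2 lawE.
have mEFin_pos : measurable_fun setT (@EFin R)^\+.
  exact/measurable_funepos/measurable_EFinP.
have mEFin_neg : measurable_fun setT (@EFin R)^\-.
  exact/measurable_funeneg/measurable_EFinP.
have pos_fin := integrable_pos_fin_num mG2 iY2.
rewrite [LHS]integralE [X in _ = _ * X]integralE muleBr ?fin_num_adde_defr //.
rewrite -[(fun x => (Y x)%:E)]/(EFin \o Y) funepos_comp funeneg_comp.
by rewrite !(ge0_integral_comp_scaled_law _ _ (NngNum c0) _ mG1 mG2).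
Qed.

End integral_law.

Section bool_events.
Context {d} {T : measurableType d} (X : T -> bool).

Lemma ev_bool_setU : ev X true `|` ev X false = setT.
Proof.
by apply/seteqP; split=> // t _; rewrite /ev /=; case: (X t); [left|right].
Qed.

Lemma ev_bool_setI : ev X true `&` ev X false = set0.
Proof. by apply/seteqP; split=> // t [] /=; rewrite /ev /= => ->. Qed.

Lemma setI_ev_bool (S : set T) : S = (S `&` ev X true) `|` (S `&` ev X false).
Proof. by rewrite -setIUr ev_bool_setU setIT. Qed.

Lemma setI_ev_bool_disj (S : set T) :
  (S `&` ev X true) `&` (S `&` ev X false) = set0.
Proof. by rewrite setIACA setIid ev_bool_setI setI0. Qed.

End bool_events.

Section probability_pr.
Context {d} {T : measurableType d} {R : realType} (P : probability T R).
Implicit Types S : set T.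

Lemma prE S : measurable S -> P S = (pr P S)%:E.
Proof. by move=> mS; rewrite /pr fineK // fin_num_measure. Qed.

Lemma le_pr S1 S2 : measurable S1 -> measurable S2 -> S1 `<=` S2 ->
  pr P S1 <= pr P S2.
Proof. by move=> m1 m2 S12; rewrite -lee_fin -!prE // le_measure // inE. Qed.

Lemma pr_split_bool (X : T -> bool) {S} : (forall b, measurable (ev X b)) ->
  measurable S -> pr P S = pr P (S `&` ev X true) + pr P (S `&` ev X false).
Proof.
move=> mX mS; have mST := measurableI _ _ mS (mX true).
have mSF := measurableI _ _ mS (mX false).
apply: EFin_inj; rewrite EFinD -!prE // {1}(setI_ev_bool X S).
by apply: measureU => //; exact: setI_ev_bool_disj.
Qed.

Variables (Y : T -> R) (mY : measurable_fun setT Y).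
Hypothesis iY : P.-integrable setT (EFin \o Y).

Lemma Rintegral_split_bool (X : T -> bool) {S} : (forall b, measurable (ev X b)) ->
  measurable S -> \int[P]_(x in S) Y x =
  \int[P]_(x in S `&` ev X true) Y x + \int[P]_(x in S `&` ev X false) Y x.
Proof.
move=> mX mS; have mST := measurableI _ _ mS (mX true).
have mSF := measurableI _ _ mS (mX false).
rewrite {1}(setI_ev_bool X S) Rintegral_setU //.
- by rewrite -setI_ev_bool; exact: integrableS iY.
- by rewrite /disj_set setI_ev_bool_disj.
Qed.

Lemma Rintegral_scaled_law (G1 G2 : set T) (c : R) :
  measurable G1 -> measurable G2 -> 0 <= c ->
  (forall B, measurable B ->
     pr P (G1 `&` Y @^-1` B) = c * pr P (G2 `&` Y @^-1` B)) ->
  \int[P]_(x in G1) Y x = c * \int[P]_(x in G2) Y x.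
Proof.
move=> mG1 mG2 c0 lawE.
rewrite /Rintegral (integral_scaled_law _ _ mY mG1 mG2 c0).
- by rewrite fineM // integrable_fin_num //; exact: integrableS iY.
- exact: integrableS iY.
move=> B mB; have mYB : measurable (Y @^-1` B).
  by rewrite -(setTI (_ @^-1` _)); exact: mY.
(* [P] is seen as a measure through two different coercion paths here, so the
   two sides agree only up to conversion, which [exact] handles. *)
have := congr1 EFin (lawE B mB); rewrite EFinM -!prE; [exact: id|exact: measurableI..].
Qed.

End probability_pr.

Section proxy_model.
Context {d} {T : measurableType d} {R : realType} (P : probability T R).
Variables (A C D : T -> bool) (Y : T -> R).
Hypotheses (mA : forall x, measurable (ev A x)) (mC : forall y, measurable (ev C y))
  (mD : forall z, measurable (ev D z)).
Hypotheses (mY : measurable_fun setT Y) (iY : P.-integrable setT (EFin \o Y)).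
Hypothesis factorization : forall (x y z : bool) (B : set R), measurable B ->
  pr P (ev A x `&` ev C y `&` ev D z `&` (Y @^-1` B)) =
    pr P (ev C y) * cpr P (ev D z) (ev C y) * cpr P (ev A x) (ev C y)
    * cpr P (Y @^-1` B) (ev A x `&` ev C y).
Hypothesis pr_ACD_gt0 : forall x y z, 0 < pr P (ev A x `&` ev C y `&` ev D z).

Local Notation AC x y := (ev A x `&` ev C y).
Local Notation q z y := (cpr P (ev D z) (ev C y)).

Let mAC x y : measurable (AC x y). Proof. exact: measurableI. Qed.

Lemma pr_AC_gt0 x y : 0 < pr P (AC x y).
Proof.
apply: (lt_le_trans (pr_ACD_gt0 x y true)); apply: le_pr; last exact: subIsetl.
- exact: measurableI (mAC x y) (mD true).
- exact: mAC.
Qed.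

Lemma pr_C_gt0 y : 0 < pr P (ev C y).
Proof.
apply: (lt_le_trans (pr_AC_gt0 true y)).
by apply: le_pr; [exact: mAC|exact: mC|exact: subIsetr].
Qed.

Lemma pr_ACD_preimage x y z B : measurable B ->
  pr P (AC x y `&` ev D z `&` Y @^-1` B) = q z y * pr P (AC x y `&` Y @^-1` B).
Proof.
move=> mB; rewrite factorization // /cpr (setIC (Y @^-1` B)).
have := pr_C_gt0 y; have := pr_AC_gt0 x y => ACy_gt0 Cy_gt0.
by field; rewrite !lt0r_neq0.
Qed.

Lemma pr_ACD x y z : pr P (AC x y `&` ev D z) = q z y * pr P (AC x y).
Proof.
by have := pr_ACD_preimage x y z _ measurableT; rewrite preimage_setT !setIT.
Qed.

Lemma cpr_D_gt0 z y : 0 < q z y.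
Proof.
rewrite divr_gt0 ?pr_C_gt0 //; apply: (lt_le_trans (pr_ACD_gt0 true y z)).
apply: le_pr; [exact: measurableI (mAC true y) (mD z)|exact: measurableI|].
by move=> t [[_ Ct] Dt].
Qed.

Lemma cpr_D_false y : q false y = 1 - q true y.
Proof.
rewrite /cpr !(setIC (ev D _)); move: (pr_C_gt0 y).
by rewrite (pr_split_bool P D mD (mC y)) => Cy_gt0; field; rewrite lt0r_neq0.
Qed.

Lemma cpr_D_lt1 y : q true y < 1.
Proof. by rewrite -subr_gt0 -cpr_D_false cpr_D_gt0. Qed.

Lemma Rintegral_ACD x y z :
  \int[P]_(t in AC x y `&` ev D z) Y t = q z y * \int[P]_(t in AC x y) Y t.
Proof.
apply: Rintegral_scaled_law => //.
- exact: measurableI (mAC x y) (mD z).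
- exact/ltW/cpr_D_gt0.
- exact: pr_ACD_preimage.
Qed.

Lemma cpr_D_C_neq :
  (exists y z, pr P (ev C y `&` ev D z) <> pr P (ev C y) * pr P (ev D z)) ->
  q true true != q true false.
Proof.
move=> [y [z CD_dep]]; apply/eqP => q_eq; apply: CD_dep.
have q_indep z' y' : q z' y' = q z' true.
  by case: z'; case: y' => //; rewrite !cpr_D_false q_eq.
have pr_CD y' : pr P (ev C y' `&` ev D z) = q z true * pr P (ev C y').
  by rewrite -(q_indep z y') /cpr setIC divfK // lt0r_neq0 // pr_C_gt0.
have pr_C_sum : pr P (ev C true) + pr P (ev C false) = 1.
  rewrite -[in LHS](setTI (ev C true)) -[in LHS](setTI (ev C false)).
  by rewrite -pr_split_bool // /pr probability_setT.
have pr_D : pr P (ev D z) = q z true.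
  rewrite (pr_split_bool P C mC (mD z)) !(setIC (ev D z)) !pr_CD.
  by rewrite -mulrDr pr_C_sum mulr1.
by rewrite pr_CD pr_D mulrC.
Qed.

Local Notation J x y := (\int[P]_(t in AC x y) Y t).

Lemma cexp_AD x z : cexp P Y (ev A x `&` ev D z) =
  (q z true * J x true + q z false * J x false) /
  (q z true * pr P (AC x true) + q z false * pr P (AC x false)).
Proof.
have mAD : measurable (ev A x `&` ev D z) by exact: measurableI.
rewrite /cexp -[fine _]/(\int[P]_(t in ev A x `&` ev D z) Y t).
rewrite (Rintegral_split_bool _ _ iY C mC mAD).
rewrite (pr_split_bool P C mC mAD) !(setIAC (ev A x) (ev D z)).
by rewrite !Rintegral_ACD !pr_ACD.
Qed.

Local Notation gain x :=
  (mixture_gain (q true true) (q true false) (pr P (AC x true)) (pr P (AC x false))).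

Lemma cexp_AD_gap x :
  cexp P Y (ev A x `&` ev D true) - cexp P Y (ev A x `&` ev D false) =
  (cexp P Y (AC x true) - cexp P Y (AC x false)) * gain x.
Proof.
rewrite !cexp_AD !cpr_D_false; apply: mixture_gap.
all: by rewrite ?cpr_D_gt0 ?cpr_D_lt1 ?pr_AC_gt0.
Qed.

Lemma gain_mul_gt0 :
  (exists y z, pr P (ev C y `&` ev D z) <> pr P (ev C y) * pr P (ev D z)) ->
  0 < gain true * gain false.
Proof.
move=> /cpr_D_C_neq q_neq.
rewrite -sgr_gt0 sgrM !sgr_mixture_gain -?expr2 ?sqr_sg.
all: by rewrite ?subr_eq0 ?q_neq ?cpr_D_gt0 ?cpr_D_lt1 ?pr_AC_gt0.
Qed.

End proxy_model.

Theorem theorem1 (d : measure_display) (T : measurableType d) (R : realType)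
  (P : probability T R) (A C D : T -> bool) (Y : T -> R)
  (mA : forall x, measurable (ev A x))
  (mC : forall y, measurable (ev C y))
  (mD : forall z, measurable (ev D z))
  (mY : measurable_fun setT Y)
  (iY : P.-integrable setT (fun t => (Y t)%:E))
  (* p(A,C,D,Y) = p(C) p(D|C) p(A|C) p(Y|A,C) *)
  (fact : forall (x y z : bool) (B : set R), measurable B ->
     pr P (ev A x `&` ev C y `&` ev D z `&` (Y @^-1` B)) =
       pr P (ev C y) * cpr P (ev D z) (ev C y) * cpr P (ev A x) (ev C y)
       * cpr P (Y @^-1` B) (ev A x `&` ev C y))
  (* C and D are dependent *)
  (dep : exists y z, pr P (ev C y `&` ev D z) <> pr P (ev C y) * pr P (ev D z))
  (* positivity *)
  (pos : forall x y z, 0 < pr P (ev A x `&` ev C y `&` ev D z)) :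
  monotone_in (fun x z => cexp P Y (ev A x `&` ev D z)) ->
  monotone_in (fun x y => cexp P Y (ev A x `&` ev C y)).
Proof.
move=> mon_AD; apply: (monotone_in_scaled _ _ mon_AD); last first.
  exact: cexp_AD_gap.
exact: gain_mul_gt0.
Qed.
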